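(* Let $T_2$ be the tree with vertex set $\{w,x,y,z,u_1,a_1,b_1\}$ and edges $wx,xy,yz,zu_1,u_1a_1,u_1b_1$ (order $n=7$, maximum degree $\Delta=3$). Then $\gamma^{\rm ID}(T_2)=5=\frac23\cdot 7+\frac13 = \left(\frac{\Delta-1}{\Delta}\right)n+\frac13$.
   Context: An identifying code of a graph $G$ is a set $C\subseteq V(G)$ such that every vertex $v$ has $N[v]\cap C\neq\emptyset$ and for all distinct $u,v$, $N[u]\cap C \ne N[v]\cap C$, where $N[v]$ is the closed neighborhood; $\gamma^{\rm ID}(G)$ is its minimum size. *)

From HB Require Import structures.
From mathcomp Require Import all_boot all_order all_algebra.
Set Implicit Arguments. Unset Strict Implicit. Unset Printing Implicit Defensive.

Section IdCode.
Variables (T : finType) (e : rel T).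

Definition cnbhd (v : T) : {set T} := [set u | (u == v) || e v u].

Definition is_identifying_code (C : {set T}) : Prop :=
  (forall v : T, cnbhd v :&: C != set0) /\
  (forall u v : T, u != v -> cnbhd u :&: C != cnbhd v :&: C).

Definition is_gammaID (k : nat) : Prop :=
  (exists C : {set T}, is_identifying_code C /\ #|C| = k) /\
  (forall C : {set T}, is_identifying_code C -> k <= #|C|).

Definition degree (v : T) : nat := #|[set u | e v u]|.
Definition maxdeg : nat := \max_(v : T) degree v.
End IdCode.

Inductive T2v := w | x | y | z | u1 | a1 | b1.

Definition T2v_code (v : T2v) : 'I_7 :=
  match v with w => inord 0 | x => inord 1 | y => inord 2 | z => inord 3
  | u1 => inord 4 | a1 => inord 5 | b1 => inord 6 end.
Definition T2v_decode (i : 'I_7) : T2v :=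
  match val i with 0 => w | 1 => x | 2 => y | 3 => z | 4 => u1 | 5 => a1 | _ => b1 end.
Lemma T2v_codeK : cancel T2v_code T2v_decode.
Proof. by case; rewrite /T2v_decode /= inordK. Qed.
HB.instance Definition _ := Finite.copy T2v (can_type T2v_codeK).

Definition T2_edge_dir (a b : T2v) : bool :=
  match a, b with
  | w, x | x, y | y, z | z, u1 | u1, a1 | u1, b1 => true
  | _, _ => false end.
Definition T2_adj : rel T2v := fun a b => T2_edge_dir a b || T2_edge_dir b a.

From mathcomp Require Import all_boot all_order all_algebra.
From mathcomp.algebra_tactics Require Import ring.
Set Implicit Arguments. Unset Strict Implicit. Unset Printing Implicit Defensive.
Import GRing.Theory Num.Theory.
Local Open Scope ring_scope.

(* A code C must contain y (the only vertex separating w from x), one of w, x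
   (to dominate w), and two of z, a1, b1 (to separate a1, b1 and u1 pairwise).
   If these four were all of C, then separating y from z and x from y would
   force C = {x, y, z, a1} or {x, y, z, b1}, leaving b1 resp. a1 undominated;
   hence |C| >= 5, and {x, y, z, u1, a1} is a code. *)

Lemma identifying_codeP (T : finType) (e adj : rel T) (C : {set T}) :
  (forall v t, (t \in cnbhd e v) = adj v t) ->
  reflect (is_identifying_code e C)
    ([forall v, exists t, adj v t && (t \in C)] &&
     [forall u, forall v, (u != v) ==>
        [exists t, (adj u t && (t \in C)) != (adj v t && (t \in C))]]).
Proof.
move=> adjE; apply: (iffP andP) => -[dom sep]; split.
- move=> v; have /existsP[t Ht] := forallP dom v.
  by apply/set0Pn; exists t; rewrite inE adjE.
- move=> u v uv; have /existsP[t] := implyP (forallP (forallP sep u) v) uv.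
  by rewrite -!adjE -!in_setI; apply: contra_neq => ->.
- apply/forallP => v; have /set0Pn[t] := dom v.
  by rewrite inE adjE => Ht; apply/existsP; exists t.
- apply/forallP => u; apply/forallP => v; apply/implyP => uv.
  apply: contraNT (sep u v uv); rewrite negb_exists => /forallP same.
  by apply/eqP/setP => t; have /negPn/eqP := same t; rewrite !in_setI !adjE.
Qed.

Section ListedFinType.
Variables (T : finType) (s : seq T).
Hypotheses (s_uniq : uniq s) (s_full : forall v, v \in s).

Lemma forall_listed (P : pred T) : [forall v, P v] = all P s.
Proof. by apply/forallP/allP => [Pv v _ | Ps v]; [exact: Pv | exact: Ps (s_full v)]. Qed.

Lemma exists_listed (P : pred T) : [exists v, P v] = has P s.
Proof. by apply/existsP/hasP => [[v Pv] | [v _ Pv]]; exists v. Qed.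

Lemma perm_enum_listed : perm_eq (enum T) s.
Proof. by apply: uniq_perm; rewrite ?enum_uniq // => v; rewrite mem_enum s_full. Qed.

Lemma card_listed (A : {pred T}) : #|A| = count (mem A) s.
Proof. by rewrite cardE /enum_mem size_filter -enumT (permP perm_enum_listed). Qed.

Lemma bigmax_listed (F : T -> nat) : \max_(v : T) F v = \max_(v <- s) F v.
Proof. by rewrite [index_enum _]unlock -enumT (perm_big _ perm_enum_listed). Qed.

End ListedFinType.

(* Equality on T2v is inherited from 'I_7 through inord, which does not
   reduce; T2v_eqE replaces it by a test on nat that does. *)
Definition T2v_index (v : T2v) : nat :=
  match v with w => 0 | x => 1 | y => 2 | z => 3 | u1 => 4 | a1 => 5 | b1 => 6 end.

Lemma T2v_index_inj : injective T2v_index.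
Proof. by case; case. Qed.

Lemma T2v_eqE (u v : T2v) : (u == v) = (T2v_index u == T2v_index v).
Proof. by rewrite (inj_eq T2v_index_inj). Qed.

Lemma in_cnbhd_T2 v t :
  (t \in cnbhd T2_adj v) = (T2v_index t == T2v_index v) || T2_adj v t.
Proof. by rewrite inE T2v_eqE. Qed.

Definition T2_vertices : seq T2v := [:: w; x; y; z; u1; a1; b1].

Lemma T2_vertices_uniq : uniq T2_vertices.
Proof. by rewrite /= !inE !T2v_eqE. Qed.

Lemma T2_vertices_full v : v \in T2_vertices.
Proof. by rewrite !inE !T2v_eqE; case: v. Qed.

Section T2.

Let forallT2 := forall_listed T2_vertices_full.
Let existsT2 := exists_listed T2_vertices_full.
Let cardT2 := card_listed T2_vertices_uniq T2_vertices_full.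

Lemma card_T2v : #|{: T2v}| = 7%N.
Proof. by rewrite cardT2. Qed.

Lemma maxdeg_T2 : maxdeg T2_adj = 3%N.
Proof.
rewrite /maxdeg (bigmax_listed T2_vertices_uniq T2_vertices_full).
by rewrite !big_cons big_nil /degree !cardsE !cardT2.
Qed.

Lemma T2_identifying_code_card_gt4 C :
  is_identifying_code T2_adj C -> (4 < #|C|)%N.
Proof.
rewrite cardT2 => /(identifying_codeP _ in_cnbhd_T2).
rewrite !forallT2 /= !forallT2 /= !existsT2 /= !T2v_eqE /=.
by case: (w \in C); case: (x \in C); case: (y \in C); case: (z \in C);
   case: (u1 \in C); case: (a1 \in C); case: (b1 \in C).
Qed.

Lemma T2_identifying_code_setC_w_b1 : is_identifying_code T2_adj (~: [set w; b1]).
Proof.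
apply/(identifying_codeP _ in_cnbhd_T2).
by rewrite !forallT2 /= !forallT2 /= !existsT2 /= !in_setC !in_set2 !T2v_eqE.
Qed.

Lemma gammaID_T2 : is_gammaID T2_adj 5.
Proof.
split=> [|C]; last exact: T2_identifying_code_card_gt4.
exists (~: [set w; b1]); split; first exact: T2_identifying_code_setC_w_b1.
by rewrite cardT2 /= !in_setC !in_set2 !T2v_eqE.
Qed.

End T2.

Theorem mainTheorem6 :
  #|{: T2v}| = 7%N /\ maxdeg T2_adj = 3%N /\
  is_gammaID T2_adj 5 /\
  (5%:R : rat) = 2%:R / 3%:R * 7%:R + 1%:R / 3%:R /\
  (5%:R : rat) = ((maxdeg T2_adj)%:R - 1) / (maxdeg T2_adj)%:R * (#|{: T2v}|)%:R + 1 / 3%:R.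
Proof.
rewrite card_T2v maxdeg_T2; do 2!split=> //.
by split; [exact: gammaID_T2 | split; field].
Qed.
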